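(* Among the exposure metrics $ED, ER, DTD, DTR, DID, DIR$, exactly $ED$, $DTD$ and $DID$ satisfy optimality of random rankings: for every population $\mathcal D$ with uniform relevance, if $r$ is drawn uniformly at random from the set of all rankings of the full population $\mathcal D$, then $\mathbb E[m(r)]=v_{\mathrm{opt}}(m)$. In particular $ER$, $DTR$ and $DIR$ do not satisfy this property.
   Context: A population is a finite set $\mathcal{D}$ of candidates partitioned into two nonempty groups, a non-protected group $G_0$ and a protected group $G_1$; each candidate $d$ has a relevance score $y(d)\in\mathbb R$; uniform relevance means $y(d)=1$ for all $d$. For a candidate set $D\subseteq\mathcal D$ with $n=|D|$, a ranking is a bijection $r:\{1,\dots,n\}\to D$ and $r^{-1}(d)$ is the position of $d$. Position bias $b(k)=1/\log_2(k+1)$. For $G\in\{G_0,G_1\}$: $\mathrm{Exposure}(G|r)=\frac{1}{|G|}\sum_{d\in G\cap D} b(r^{-1}(d))$, $Y(G)=\frac1{|G|}\sum_{d\in G}y(d)$, $CTR(G|r)=\frac1{|G|}\sum_{d\in G\cap D} b(r^{-1}(d))\,y(d)$. $ED(r)=\mathrm{Exposure}(G_1|r)-\mathrm{Exposure}(G_0|r)$, $ER(r)=\mathrm{Exposure}(G_1|r)/\mathrm{Exposure}(G_0|r)$, $DTD(r)=\frac{\mathrm{Exposure}(G_1|r)}{Y(G_1)}-\frac{\mathrm{Exposure}(G_0|r)}{Y(G_0)}$, $DTR(r)=\frac{\mathrm{Exposure}(G_1|r)}{\mathrm{Exposure}(G_0|r)}\cdot\frac{Y(G_0)}{Y(G_1)}$,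 $DID(r)=\frac{CTR(G_1|r)}{Y(G_1)}-\frac{CTR(G_0|r)}{Y(G_0)}$, $DIR(r)=\frac{CTR(G_1|r)}{CTR(G_0|r)}\cdot\frac{Y(G_0)}{Y(G_1)}$. Optimal values: $v_{\mathrm{opt}}=0$ for $ED,DTD,DID$ and $v_{\mathrm{opt}}=1$ for $ER,DTR,DIR$. *)

From HB Require Import structures.
From mathcomp Require Import all_boot all_order all_algebra.
From mathcomp Require Import reals exp.
Set Implicit Arguments. Unset Strict Implicit. Unset Printing Implicit Defensive.
Import Order.TTheory GRing.Theory Num.Theory.
Local Open Scope ring_scope.

Section Fairness.
Variable R : realType.

Definition log2 (x : R) : R := ln x / ln 2.
Definition bias (k : nat) : R := 1 / log2 k.+1%:R.

(* A population is a finite type T with a group indicator g: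
   G1 (protected) = [set d | g d], G0 (non-protected) = [set d | ~~ g d].
   A ranking of the full population is a bijection r : 'I_#|T| -> T;
   r i is the candidate at position i.+1 (so r^{-1}(d) = position). *)
Definition ranking (T : finType) := {ffun 'I_#|T| -> T}.
Definition is_ranking (T : finType) (r : ranking T) : bool := injectiveb r.

Definition G1 (T : finType) (g : T -> bool) : {set T} := [set d | g d].
Definition G0 (T : finType) (g : T -> bool) : {set T} := [set d | ~~ g d].

Definition Exposure (T : finType) (G : {set T}) (r : ranking T) : R :=
  (#|G|%:R)^-1 * \sum_(i : 'I_#|T| | r i \in G) bias i.+1.
Definition Yavg (T : finType) (G : {set T}) (y : T -> R) : R :=
  (#|G|%:R)^-1 * \sum_(d in G) y d.
Definition CTR (T : finType) (G : {set T}) (y : T -> R) (r : ranking T) : R :=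
  (#|G|%:R)^-1 * \sum_(i : 'I_#|T| | r i \in G) bias i.+1 * y (r i).

Definition metric :=
  forall T : finType, (T -> bool) -> (T -> R) -> ranking T -> R.

Definition ED : metric := fun T g y r =>
  Exposure (G1 g) r - Exposure (G0 g) r.
Definition ER : metric := fun T g y r =>
  Exposure (G1 g) r / Exposure (G0 g) r.
Definition DTD : metric := fun T g y r =>
  Exposure (G1 g) r / Yavg (G1 g) y - Exposure (G0 g) r / Yavg (G0 g) y.
Definition DTR : metric := fun T g y r =>
  (Exposure (G1 g) r / Exposure (G0 g) r) * (Yavg (G0 g) y / Yavg (G1 g) y).
Definition DID : metric := fun T g y r =>
  CTR (G1 g) y r / Yavg (G1 g) y - CTR (G0 g) y r / Yavg (G0 g) y.
Definition DIR : metric := fun T g y r =>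
  (CTR (G1 g) y r / CTR (G0 g) y r) * (Yavg (G0 g) y / Yavg (G1 g) y).

Definition expected_random (m : metric) (T : finType) (g : T -> bool)
  (y : T -> R) : R :=
  (#|[set r : ranking T | is_ranking r]|%:R)^-1 *
  \sum_(r : ranking T | is_ranking r) m T g y r.

Definition optimal_random (m : metric) (vopt : R) : Prop :=
  forall (T : finType) (g : T -> bool),
    (exists d, ~~ g d) -> (exists d, g d) ->
    expected_random m g (fun _ => 1) = vopt.

End Fairness.

From HB Require Import structures.
From mathcomp Require Import all_boot all_order all_algebra perm.
From mathcomp Require Import reals exp.
From mathcomp Require Import ring.
Set Implicit Arguments. Unset Strict Implicit. Unset Printing Implicit Defensive.
Import Order.TTheory GRing.Theory Num.Theory.
Local Open Scope ring_scope.

(* Composing rankings with the transposition (d d') is a bijection between the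
   rankings that put d at position i and those that put d' there.  Hence the
   number of rankings placing some member of a group G at position i is |G|
   times a count that does not depend on G, and after the normalisation by |G|
   the expected exposure is the same for every nonempty group: E[ED] = 0.
   Under uniform relevance the average relevances are 1 and CTR is exposure,
   so DTD and DID reduce to ED while DTR and DIR reduce to ER.  For ER one
   candidate in each group suffices: the two rankings give ER = 1/x and x with
   x = b(2)/b(1) < 1, and (x + 1/x)/2 = 1 would force x = 1. *)

Section ExpectedExposure.
Variable R : realType.

Definition rankings_at (T : finType) (i : 'I_#|T|) (d : T) : {set ranking T} :=
  [set r | is_ranking r & r i == d].

Lemma is_ranking_comp (T : finType) (f : T -> T) (r : ranking T) :
  injective f -> is_ranking [ffun i => f (r i)] = is_ranking r.
Proof.
move=> f_inj; apply/injectiveP/injectiveP => r_inj i j.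
  by move=> rij; apply: r_inj; rewrite !ffunE rij.
by rewrite !ffunE => /f_inj; apply: r_inj.
Qed.

Lemma card_rankings_at (T : finType) (i : 'I_#|T|) (d d' : T) :
  #|rankings_at i d| = #|rankings_at i d'|.
Proof.
pose swap (r : ranking T) : ranking T := [ffun j => tperm d d' (r j)].
have swapK : involutive swap by move=> r; apply/ffunP => j; rewrite !ffunE tpermK.
rewrite -(card_preimset _ (inv_inj swapK)); apply: eq_card => r.
rewrite !inE ffunE is_ranking_comp; last exact: perm_inj.
by rewrite -{2}(tpermR d d') (inj_eq perm_inj).
Qed.

Lemma card_rankings_in (T : finType) (i : 'I_#|T|) (G : {set T}) (d0 : T) :
  #|[set r | is_ranking r & r i \in G]| = (#|G| * #|rankings_at i d0|)%N.
Proof.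
rewrite -sum1_card (partition_big (fun r : ranking T => r i) (mem G)) => [|r];
  last by rewrite inE => /andP[].
rewrite -sum_nat_const; apply: eq_bigr => d dG.
rewrite (card_rankings_at i d0 d) -sum1_card; apply: eq_bigl => r.
by rewrite !inE; case: (r i =P d) => [->|]; rewrite ?andbF // (dG : d \in G) !andbT.
Qed.

Lemma sum_Exposure (T : finType) (G : {set T}) (d0 : T) : G != set0 ->
  \sum_(r | is_ranking r) Exposure R G r =
  \sum_(i : 'I_#|T|) bias R i.+1 * #|rankings_at i d0|%:R.
Proof.
move=> G_neq0; rewrite /Exposure -mulr_sumr.
rewrite (exchange_big_dep xpredT) //= mulr_sumr; apply: eq_bigr => i _.
have G_gt0 : (#|G|%:R : R) != 0 by rewrite pnatr_eq0 cards_eq0.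
rewrite sumr_const (eq_card (B := [set r | is_ranking r & r i \in G])) => [|r];
  last by rewrite inE.
rewrite (card_rankings_in i G d0) -[bias _ _ *+ _]mulr_natr natrM.
by field.
Qed.

Lemma G1_neq0 (T : finType) (g : T -> bool) : (exists d, g d) -> G1 g != set0.
Proof. by case=> d gd; apply/set0Pn; exists d; rewrite inE. Qed.

Lemma G0_neq0 (T : finType) (g : T -> bool) : (exists d, ~~ g d) -> G0 g != set0.
Proof. by case=> d gd; apply/set0Pn; exists d; rewrite inE. Qed.

Lemma expected_ED (T : finType) (g : T -> bool) (y : T -> R) :
  (exists d, ~~ g d) -> (exists d, g d) -> expected_random (@ED R) g y = 0.
Proof.
move=> /G0_neq0 G0g /G1_neq0 G1g; have [d0 _] := set0Pn _ G1g.
rewrite /expected_random /ED sumrB.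
by rewrite (sum_Exposure d0 G1g) (sum_Exposure d0 G0g) subrr mulr0.
Qed.

End ExpectedExposure.

Section UniformRelevance.
Variable R : realType.

Lemma Yavg1 (T : finType) (G : {set T}) : G != set0 -> Yavg G (fun _ => 1 : R) = 1.
Proof.
by move=> G_neq0; rewrite /Yavg sumr_const mulVf // pnatr_eq0 cards_eq0.
Qed.

Lemma CTR1 (T : finType) (G : {set T}) (r : ranking T) :
  CTR G (fun _ => 1 : R) r = Exposure R G r.
Proof. by rewrite /CTR /Exposure; under eq_bigr do rewrite mulr1. Qed.

Lemma optimal_random_uniformE (m m' : metric R) (v : R) :
  (forall (T : finType) (g : T -> bool) (r : ranking T),
     G0 g != set0 -> G1 g != set0 -> m T g (fun _ => 1) r = m' T g (fun _ => 1) r) ->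
  optimal_random m v <-> optimal_random m' v.
Proof.
move=> mm'; suff expectedE (T : finType) (g : T -> bool) :
    (exists d, ~~ g d) -> (exists d, g d) ->
    expected_random m g (fun _ => 1) = expected_random m' g (fun _ => 1).
  by split=> opt T g g0 g1; [rewrite -expectedE | rewrite expectedE] => //; apply: opt.
move=> /G0_neq0 G0g /G1_neq0 G1g; rewrite /expected_random.
by congr (_ * _); apply: eq_bigr => r _; apply: mm'.
Qed.

Lemma optimal_random_DTD : optimal_random (@DTD R) 0 <-> optimal_random (@ED R) 0.
Proof. by apply: optimal_random_uniformE => T g r *; rewrite /DTD !Yavg1 ?divr1. Qed.

Lemma optimal_random_DID : optimal_random (@DID R) 0 <-> optimal_random (@ED R) 0.
Proof.
by apply: optimal_random_uniformE => T g r *; rewrite /DID !Yavg1 ?divr1 ?CTR1.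
Qed.

Lemma optimal_random_DTR : optimal_random (@DTR R) 1 <-> optimal_random (@ER R) 1.
Proof.
by apply: optimal_random_uniformE => T g r *; rewrite /DTR !Yavg1 ?divr1 ?mulr1.
Qed.

Lemma optimal_random_DIR : optimal_random (@DIR R) 1 <-> optimal_random (@ER R) 1.
Proof.
by apply: optimal_random_uniformE => T g r *; rewrite /DIR !Yavg1 ?divr1 ?mulr1 ?CTR1.
Qed.

End UniformRelevance.

Lemma addf_inv_eq2 (F : fieldType) (x : F) : x != 0 -> x + x^-1 = 2 -> x = 1.
Proof.
move=> x_neq0 x_add_inv.
have : (x - 1) ^+ 2 = x * (x + x^-1 - 2) by field.
by rewrite x_add_inv subrr mulr0 => /eqP; rewrite expf_eq0 subr_eq0 => /eqP.
Qed.

Section PositionBias.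
Variable R : realType.

Lemma log2_gt0 (x : R) : 1 < x -> 0 < log2 x.
Proof. by move=> x_gt1; rewrite /log2 divr_gt0 ?ln_gt0 // ltr1n. Qed.

Lemma bias_gt0 (k : nat) : (0 < k)%N -> 0 < bias R k.
Proof. by move=> k_gt0; rewrite /bias div1r invr_gt0 log2_gt0 // ltr1n ltnS. Qed.

Lemma bias_lt (m n : nat) : (0 < m < n)%N -> bias R n < bias R m.
Proof.
case/andP=> m_gt0 mn; have n_gt0 := ltn_trans m_gt0 mn.
rewrite /bias !div1r ltf_pV2 ?posrE ?log2_gt0 ?ltr1n ?ltnS //.
by rewrite /log2 ltr_pM2r ?invr_gt0 ?ln_gt0 ?ltr1n // ltr_ln ?posrE ?ltr0n // ltr_nat.
Qed.

End PositionBias.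

Section TwoCandidates.
Variable R : realType.

Lemma Exposure_set1 (T : finType) (r : ranking T) (i : 'I_#|T|) :
  is_ranking r -> Exposure R [set r i] r = bias R i.+1.
Proof.
move/injectiveP=> r_inj; rewrite /Exposure cards1 invr1 mul1r (big_pred1 i) // => j.
by rewrite inE (inj_eq r_inj).
Qed.

Let first : 'I_#|{: bool}| := cast_ord (esym card_bool) ord0.
Let second : 'I_#|{: bool}| := cast_ord (esym card_bool) ord_max.

Lemma neq_first (i : 'I_#|{: bool}|) : i != first -> i = second.
Proof.
have : (i < 2)%N by rewrite -card_bool.
by case: i => [[|[|]]] //= *; apply: val_inj.
Qed.

Definition rank_first (b : bool) : ranking bool :=
  [ffun i => if i == first then b else ~~ b].

Lemma is_ranking_first (b : bool) : is_ranking (rank_first b).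
Proof.
apply/injectiveP => i j; rewrite !ffunE.
case: eqP => [->|/eqP /neq_first ->]; case: eqP => [->|/eqP /neq_first ->] //;
  by case: b.
Qed.

Lemma rankings_bool :
  [set r : ranking bool | is_ranking r] = [set rank_first true; rank_first false].
Proof.
apply/setP => r; rewrite !inE; apply/idP/idP => [/injectiveP r_inj|]; last first.
  by case/orP=> /eqP ->; apply: is_ranking_first.
suff -> : r = rank_first (r first) by case: (r first); rewrite eqxx ?orbT.
apply/ffunP => i; rewrite ffunE; case: eqP => [-> //|/eqP /neq_first ->].
have : r second != r first by rewrite (inj_eq r_inj).
by case: (r first); case: (r second).
Qed.

Lemma rank_first_neq : rank_first true != rank_first false.
Proof. by apply/eqP => /ffunP /(_ first); rewrite !ffunE eqxx. Qed.

Lemma Exposure_rank_first (b : bool) :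
  Exposure R [set b] (rank_first b) = bias R 1 /\
  Exposure R [set ~~ b] (rank_first b) = bias R 2.
Proof.
have /Exposure_set1 E := is_ranking_first b.
have -> : [set b] = [set rank_first b first] by rewrite ffunE eqxx.
have -> : [set ~~ b] = [set rank_first b second] by rewrite ffunE.
by rewrite !E.
Qed.

Lemma expected_ER_bool :
  expected_random (@ER R) (fun x : bool => x) (fun _ => 1) =
  2^-1 * (bias R 1 / bias R 2 + bias R 2 / bias R 1).
Proof.
rewrite /expected_random (eq_bigl (fun r => r \in [set r : ranking bool | is_ranking r]));
  last by move=> r; rewrite inE.
rewrite rankings_bool cards2 rank_first_neq big_setU1 ?big_set1 /=; last first.
  by rewrite inE rank_first_neq.
have G1_bool : G1 (fun x : bool => x) = [set true] by apply/setP => -[]; rewrite !inE.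
have G0_bool : G0 (fun x : bool => x) = [set false] by apply/setP => -[]; rewrite !inE.
have [/= E1t E0t] := Exposure_rank_first true.
have [/= E0f E1f] := Exposure_rank_first false.
by rewrite /ER G1_bool G0_bool E1t E0t E1f E0f.
Qed.

Lemma ER_not_optimal_random : ~ optimal_random (@ER R) 1.
Proof.
move=> /(_ bool (fun x => x) (ex_intro _ false isT) (ex_intro _ true isT)).
have b2_lt_b1 : bias R 2 < bias R 1 by apply: bias_lt.
rewrite expected_ER_bool -[bias R 1 / _]invf_div; set x := bias R 2 / bias R 1 => E.
have x_neq0 : x != 0 by rewrite gt_eqF // divr_gt0 ?bias_gt0.
have /addf_inv_eq2 : x + x^-1 = 2.
  have two_neq0 : (2 : R) != 0 by rewrite pnatr_eq0.
  by apply: (mulfI (invr_neq0 two_neq0)); rewrite mulVf // addrC.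
by move=> /(_ x_neq0) /divr1_eq b2_eq_b1; move: b2_lt_b1; rewrite b2_eq_b1 ltxx.
Qed.

End TwoCandidates.

Theorem theorem7 (R : realType) :
  (optimal_random (@ED R) 0 /\ optimal_random (@DTD R) 0 /\
   optimal_random (@DID R) 0) /\
  (~ optimal_random (@ER R) 1 /\ ~ optimal_random (@DTR R) 1 /\
   ~ optimal_random (@DIR R) 1).
Proof.
have ED_opt : optimal_random (@ED R) 0 by move=> T g; apply: expected_ED.
have ER_not := @ER_not_optimal_random R.
split; first by rewrite optimal_random_DTD optimal_random_DID.
by rewrite optimal_random_DTR optimal_random_DIR.
Qed.
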